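(* Let $\{\mathcal H,\gamma,\ell,\ell^{(2)}\}$ be metric hypersurface data and $\theta$ any one-form on $\mathcal H$. Then $$n^b\mathring\nabla_a\theta_b=\mathring\nabla_a\big(\theta(n)\big)-\theta(n)s_a-P^{bc}U_{ac}\theta_b+n^{(2)}\big(\theta(n)\mathring\nabla_a\ell^{(2)}+P^{bc}F_{ac}\theta_b\big),$$ $$n^b\mathring\nabla_b\theta_a=(\mathcal L_n\theta)_a-\theta(n)s_a-P^{bc}U_{ac}\theta_b+n^{(2)}\big(\theta(n)\mathring\nabla_a\ell^{(2)}+P^{bc}F_{ac}\theta_b\big),$$ $$2n^b\mathring\nabla_{(a}\theta_{b)}=(\mathcal L_n\theta)_a+\mathring\nabla_a\big(\theta(n)\big)-2\big(\theta(n)s_a+P^{bc}U_{ac}\theta_b\big)+2n^{(2)}\big(\theta(n)\mathring\nabla_a\ell^{(2)}+P^{bc}F_{ac}\theta_b\big),$$ $$n^an^b\mathring\nabla_a\theta_b=\mathcal L_n\big(\theta(n)\big)+n^{(2)}\theta(n)n(\ell^{(2)})+P^{bc}\theta_b\Big(2n^{(2)}s_c-\tfrac12(n^{(2)})^2\mathring\nabla_c\ell^{(2)}-\tfrac12\mathring\nabla_cn^{(2)}\Big).$$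
   Context: Metric hypersurface data: $\mathcal H$ smooth $\mathfrak n$-manifold with symmetric $(0,2)$-tensor $\gamma$, one-form $\ell$, function $\ell^{(2)}$ such that $\mathcal A((W,a),(V,b))=\gamma(W,V)+a\ell(V)+b\ell(W)+ab\ell^{(2)}$ is non-degenerate on each $T_p\mathcal H\times\mathbb R$. $P$ (symmetric $(2,0)$), $n$, $n^{(2)}$ defined by $\gamma_{ab}n^b+n^{(2)}\ell_a=0$, $\ell_an^a+n^{(2)}\ell^{(2)}=1$, $P^{ab}\ell_b+\ell^{(2)}n^a=0$, $P^{ac}\gamma_{cb}+\ell_bn^a=\delta^a_b$. $U_{ab}=\frac12(\mathcal L_n\gamma)_{ab}+\ell_{(a}\partial_{b)}n^{(2)}$, $F_{ab}=\partial_{[a}\ell_{b]}$ ($F=\frac12d\ell$), $s_a=n^bF_{ba}$, $\theta(n)=\theta_an^a$; brackets: weight-$\frac12$ (anti)symmetrization. $\mathring\nabla$ is the torsion-free connection on $\mathcal H$ with $\mathring\nabla_a\gamma_{bc}=-\ell_cU_{ab}-\ell_bU_{ac}$ and $\mathring\nabla_a\ell_b=F_{ab}-\ell^{(2)}U_{ab}$. *)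

(* Local-coordinate formalization:
   the hypersurface H is represented by an open coordinate domain U of
   'rV[R]_n (n = \mathfrak n); tensors are given by their components. *)
From HB Require Import structures.
From mathcomp Require Import all_boot all_order all_algebra.
From mathcomp Require Import all_classical all_reals all_analysis.
Set Implicit Arguments. Unset Strict Implicit. Unset Printing Implicit Defensive.
Import Order.TTheory GRing.Theory Num.Theory.
Import numFieldNormedType.Exports.
Local Open Scope ring_scope.
Local Open Scope classical_set_scope.

Section Defs.
Variables (R : realType) (n : nat).
Local Notation V := 'rV[R]_n.

Definition ei (i : 'I_n) : V := delta_mx 0 i.
Definition pd (f : V -> R) (i : 'I_n) (x : V) : R := derive f x (ei i).

Definition diff_on (U : set V) (f : V -> R) := forall x, U x -> differentiable f x.

Definition metric_hypersurface_data (U : set V)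
  (gam : 'I_n -> 'I_n -> V -> R) (ell : 'I_n -> V -> R) (ell2 : V -> R)
  (P : 'I_n -> 'I_n -> V -> R) (nv : 'I_n -> V -> R) (n2 : V -> R) : Prop :=
  open U /\
  (forall a b, diff_on U (gam a b)) /\ (forall a, diff_on U (ell a)) /\
  diff_on U ell2 /\ (forall a b, diff_on U (P a b)) /\
  (forall a, diff_on U (nv a)) /\ diff_on U n2 /\
  forall x, U x ->
    (forall a b, gam a b x = gam b a x) /\ (forall a b, P a b x = P b a x) /\
    (* non-degeneracy of A on T_pH x R *)
    (block_mx (\matrix_(a, b) gam a b x) (\col_a ell a x)
              (\row_b ell b x) (ell2 x)%:M : 'M[R]_(n + 1)) \in unitmx /\
    (forall a, \sum_(b < n) gam a b x * nv b x + n2 x * ell a x = 0) /\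
    (\sum_(a < n) ell a x * nv a x + n2 x * ell2 x = 1) /\
    (forall a, \sum_(b < n) P a b x * ell b x + ell2 x * nv a x = 0) /\
    (forall a b, \sum_(c < n) P a c x * gam c b x + ell b x * nv a x
                 = (a == b)%:R).

Definition lie_fun (nv : 'I_n -> V -> R) (f : V -> R) (x : V) : R :=
  \sum_(b < n) nv b x * pd f b x.
Definition lie_form (nv : 'I_n -> V -> R) (th : 'I_n -> V -> R) (a : 'I_n) (x : V) : R :=
  \sum_(b < n) (nv b x * pd (th a) b x + th b x * pd (nv b) a x).
Definition lie_sym2 (nv : 'I_n -> V -> R) (g : 'I_n -> 'I_n -> V -> R)
  (a b : 'I_n) (x : V) : R :=
  \sum_(c < n) (nv c x * pd (g a b) c x + g c b x * pd (nv c) a x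
                + g a c x * pd (nv c) b x).

Definition Uten nv n2 gam (ell : 'I_n -> V -> R) (a b : 'I_n) (x : V) : R :=
  2^-1 * lie_sym2 nv gam a b x
  + 2^-1 * (ell a x * pd n2 b x + ell b x * pd n2 a x).
Definition Ften (ell : 'I_n -> V -> R) (a b : 'I_n) (x : V) : R :=
  2^-1 * (pd (ell b) a x - pd (ell a) b x).
Definition sform nv ell (a : 'I_n) (x : V) : R := \sum_(b < n) nv b x * Ften ell b a x.
Definition contr (th nv : 'I_n -> V -> R) (x : V) : R := \sum_(a < n) th a x * nv a x.

(* covariant derivatives for a connection with Christoffel symbols
   Gam c a b = Gamma^c_{ab} *)
Definition cov_fun (f : V -> R) (a : 'I_n) (x : V) : R := pd f a x.
Definition cov_form (Gam : 'I_n -> 'I_n -> 'I_n -> V -> R) (th : 'I_n -> V -> R)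
  (a b : 'I_n) (x : V) : R :=
  pd (th b) a x - \sum_(c < n) Gam c a b x * th c x.
Definition cov_sym2 (Gam : 'I_n -> 'I_n -> 'I_n -> V -> R) (g : 'I_n -> 'I_n -> V -> R)
  (a b c : 'I_n) (x : V) : R :=
  pd (g b c) a x - \sum_(d < n) Gam d a b x * g d c x
                 - \sum_(d < n) Gam d a c x * g b d x.

Definition is_ring_nabla (U : set V) gam ell ell2 nv n2
  (Gam : 'I_n -> 'I_n -> 'I_n -> V -> R) : Prop :=
  forall x, U x ->
    (forall c a b, Gam c a b x = Gam c b a x) /\
    (forall a b c, cov_sym2 Gam gam a b c x
                   = - ell c x * Uten nv n2 gam ell a b x
                     - ell b x * Uten nv n2 gam ell a c x) /\
    (forall a b, cov_form Gam ell a b x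
                 = Ften ell a b x - ell2 x * Uten nv n2 gam ell a b x).

End Defs.

From HB Require Import structures.
From mathcomp Require Import all_boot all_order all_algebra.
From mathcomp Require Import all_classical all_reals all_analysis.
From mathcomp Require Import ring.
Set Implicit Arguments. Unset Strict Implicit. Unset Printing Implicit Defensive.
Import GRing.Theory Num.Theory.
Import numFieldNormedType.Exports.
Local Open Scope ring_scope.
Local Open Scope classical_set_scope.

(* The heart of the computation is the covariant derivative of the transverse vector n.
   Differentiating the constraints gamma(n, .) + n2 ell = 0 and ell(n) + n2 ell2 = 1
   covariantly, with the prescribed ∇gamma and ∇ell, gives the contractions of ∇_a n with
   gamma and with ell.  Since (P, n) inverts (gamma, ell), these determine
     ∇_a n^c = P^cd (U_ad - n2 F_ad) + n^c (s_a - n2 ∇_a ell2),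
   and contracting the gamma-equation once more with n gives
     ∇_a n2 = 2 n^b U_ab + 2 n2 s_a - n2^2 ∇_a ell2.
   The identities then follow from the Leibniz rule ∇_a (theta(n)) = n^b ∇_a theta_b +
   theta_b ∇_a n^b, from (L_n theta)_a = n^b ∇_b theta_a + theta_b ∇_a n^b (torsion-freeness),
   and, for the last one, from n^a s_a = 0 and the formula for ∇ n2. *)

Section HypersurfaceDuality.
Variables (R : comPzRingType) (m : nat).
Variables (gam P : 'I_m -> 'I_m -> R) (ell nv : 'I_m -> R) (ell2 n2 : R).
Hypothesis gam_sym : forall a b, gam a b = gam b a.
Hypothesis gam_nv : forall a, \sum_(b < m) gam a b * nv b + n2 * ell a = 0.
Hypothesis ell_nv : \sum_(a < m) ell a * nv a + n2 * ell2 = 1.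
Hypothesis P_ell : forall a, \sum_(b < m) P a b * ell b + ell2 * nv a = 0.
Hypothesis P_gam : forall a b,
  \sum_(c < m) P a c * gam c b + ell b * nv a = (a == b)%:R.

Lemma duality_decomposition (X : 'I_m -> R) c :
  X c = \sum_(d < m) P c d * (\sum_(b < m) gam d b * X b)
        + nv c * \sum_(b < m) ell b * X b.
Proof.
have -> : X c = \sum_(b < m) (c == b)%:R * X b.
  rewrite (bigD1 c) //= eqxx mul1r big1 ?addr0 // => b nbc.
  by rewrite eq_sym (negbTE nbc) mul0r.
under eq_bigr do rewrite -P_gam mulrDl big_distrl /=.
rewrite big_split /= exchange_big big_distrr /=; congr (_ + _).
  by apply: eq_bigr => d _; rewrite big_distrr; apply: eq_bigr => b _ /=; ring.
by apply: eq_bigr => b _ /=; ring.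
Qed.

Section Contractions.
Variables (X alpha : 'I_m -> R) (beta mu : R).
Hypothesis gam_X : forall c, \sum_(b < m) gam c b * X b = alpha c + mu * ell c.
Hypothesis ell_X : \sum_(b < m) ell b * X b = beta + mu * ell2.

Lemma duality_solve c : X c = \sum_(d < m) P c d * alpha d + beta * nv c.
Proof.
move/eqP: (P_ell c); rewrite addr_eq0 => /eqP P_ell_c.
have P_ell_mu : \sum_(d < m) P c d * (mu * ell d) = - (mu * ell2 * nv c).
  transitivity (mu * \sum_(d < m) P c d * ell d); last by rewrite P_ell_c; ring.
  by rewrite big_distrr; apply: eq_bigr => d _ /=; ring.
rewrite duality_decomposition ell_X.
under eq_bigr do rewrite gam_X mulrDr.
by rewrite big_split /= P_ell_mu; ring.
Qed.

Lemma duality_multiplier : mu = - (n2 * beta + \sum_(c < m) nv c * alpha c).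
Proof.
have contract_gam : \sum_(c < m) nv c * (\sum_(b < m) gam c b * X b)
                    = - n2 * (beta + mu * ell2).
  rewrite -ell_X big_distrr /=.
  under eq_bigr do rewrite big_distrr /=.
  rewrite exchange_big /=; apply: eq_bigr => b _.
  move/eqP: (gam_nv b); rewrite addr_eq0 => /eqP gam_nv_b.
  transitivity (X b * \sum_(c < m) gam b c * nv c).
    by rewrite big_distrr; apply: eq_bigr => c _ /=; rewrite gam_sym; ring.
  by rewrite gam_nv_b; ring.
have nv_ell : \sum_(c < m) nv c * ell c = 1 - n2 * ell2.
  by rewrite -ell_nv addrK; apply: eq_bigr => c _; ring.
move: contract_gam.
under eq_bigr do rewrite gam_X mulrDr.
rewrite big_split /=.
have -> : \sum_(c < m) nv c * (mu * ell c) = mu * (1 - n2 * ell2).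
  by rewrite -nv_ell big_distrr; apply: eq_bigr => c _ /=; ring.
move/eqP; rewrite -subr_eq0 => /eqP E.
by apply/eqP; rewrite -subr_eq0 -[X in _ == X]E; apply/eqP; ring.
Qed.
End Contractions.
End HypersurfaceDuality.

Section DoubleSums.
Variables (R : comPzRingType) (m : nat) (P : 'I_m -> 'I_m -> R) (th : 'I_m -> R).

Lemma double_sumB (T1 T2 : 'I_m -> R) k :
  \sum_(b < m) \sum_(c < m) P b c * (T1 c - k * T2 c) * th b
  = \sum_(b < m) \sum_(c < m) P b c * T1 c * th b
    - k * \sum_(b < m) \sum_(c < m) P b c * T2 c * th b.
Proof.
rewrite big_distrr -sumrB; apply: eq_bigr => b _.
by rewrite big_distrr -sumrB; apply: eq_bigr => c _ /=; ring.
Qed.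

Lemma sum_mul_double_sum (w : 'I_m -> R) (T : 'I_m -> 'I_m -> R) :
  \sum_(a < m) w a * \sum_(b < m) \sum_(c < m) P b c * T a c * th b
  = \sum_(b < m) \sum_(c < m) P b c * (\sum_(a < m) w a * T a c) * th b.
Proof.
under eq_bigr do rewrite big_distrr /=.
rewrite exchange_big; apply: eq_bigr => b _ /=.
under eq_bigr do rewrite big_distrr /=.
rewrite exchange_big; apply: eq_bigr => c _ /=.
by rewrite big_distrr big_distrl /=; apply: eq_bigr => a _ /=; ring.
Qed.
End DoubleSums.

Section CovariantCalculus.
Variables (R : realType) (n : nat).
Local Notation V := 'rV[R]_n.
Variable Gam : 'I_n -> 'I_n -> 'I_n -> V -> R.
Implicit Types (f g : V -> R) (om v : 'I_n -> V -> R) (x : V) (a : 'I_n).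

Definition cov_vec v a c x : R := pd (v c) a x + \sum_(d < n) Gam c a d x * v d x.

Lemma diff_on_derivable (U : set V) f x (e : V) : diff_on U f -> U x -> derivable f x e.
Proof. by move=> df Ux; apply/diff_derivable/df. Qed.

Lemma pd_eq_on_open {U : set V} {f g a x} : open U -> U x ->
  (forall y, U y -> f y = g y) -> pd f a x = pd g a x.
Proof.
move=> oU Ux fg; apply: near_eq_derive.
by apply: filterS (open_nbhs_nbhs (conj oU Ux)) => y /fg.
Qed.

Lemma pd_mul f g a x : derivable f x (ei R a) -> derivable g x (ei R a) ->
  pd (fun y => f y * g y) a x = f x * pd g a x + g x * pd f a x.
Proof. exact: deriveM. Qed.

Lemma contr_sumE om v : contr om v = \sum_(b < n) (fun y => om b y * v b y).
Proof. by apply/funext => y; rewrite fct_sumE. Qed.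

Lemma derivable_contr om v a x :
  (forall b, derivable (om b) x (ei R a)) -> (forall b, derivable (v b) x (ei R a)) ->
  derivable (contr om v) x (ei R a).
Proof. by move=> dom dv; rewrite contr_sumE; apply: derivable_sum => b; apply: derivableM. Qed.

Lemma pd_contr om v a x :
  (forall b, derivable (om b) x (ei R a)) -> (forall b, derivable (v b) x (ei R a)) ->
  pd (contr om v) a x = \sum_(b < n) (om b x * pd (v b) a x + v b x * pd (om b) a x).
Proof.
move=> dom dv; rewrite /pd contr_sumE derive_sum => [|b]; last exact: derivableM.
by apply: eq_bigr => b _; apply: pd_mul.
Qed.

Lemma pd_contr_cov om v a x :
  (forall b, derivable (om b) x (ei R a)) -> (forall b, derivable (v b) x (ei R a)) ->
  pd (contr om v) a x = \sum_(b < n) v b x * cov_form Gam om a b x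
                        + \sum_(b < n) om b x * cov_vec v a b x.
Proof.
move=> dom dv; rewrite pd_contr //.
have christoffel_cancel : \sum_(b < n) v b x * (\sum_(c < n) Gam c a b x * om c x)
                        = \sum_(b < n) om b x * (\sum_(d < n) Gam b a d x * v d x).
  under eq_bigr do rewrite big_distrr /=.
  rewrite exchange_big /=; apply: eq_bigr => c _.
  by rewrite big_distrr; apply: eq_bigr => b _ /=; ring.
rewrite /cov_form /cov_vec.
under [X in _ = _ + X]eq_bigr do rewrite mulrDr.
rewrite [X in _ = _ + X]big_split /= -christoffel_cancel -!big_split /=.
by apply: eq_bigr => b _; ring.
Qed.

Lemma lie_form_cov v th a x : (forall c b, Gam c a b x = Gam c b a x) ->
  lie_form v th a x = \sum_(b < n) v b x * cov_form Gam th b a x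
                      + \sum_(b < n) th b x * cov_vec v a b x.
Proof.
move=> Gam_sym.
have christoffel_cancel : \sum_(b < n) v b x * (\sum_(c < n) Gam c b a x * th c x)
                        = \sum_(b < n) th b x * (\sum_(d < n) Gam b a d x * v d x).
  under eq_bigr do rewrite big_distrr /=.
  rewrite exchange_big /=; apply: eq_bigr => c _.
  by rewrite big_distrr; apply: eq_bigr => b _ /=; rewrite -Gam_sym; ring.
rewrite /lie_form /cov_form /cov_vec.
under [X in _ = _ + X]eq_bigr do rewrite mulrDr.
rewrite [X in _ = _ + X]big_split /= -christoffel_cancel -!big_split /=.
by apply: eq_bigr => b _; ring.
Qed.

Lemma cov_leibniz_locally_cst (U : set V) om v f g (k : R) a x : open U -> U x ->
  (forall b, derivable (om b) x (ei R a)) -> (forall b, derivable (v b) x (ei R a)) ->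
  derivable f x (ei R a) -> derivable g x (ei R a) ->
  (forall y, U y -> contr om v y + f y * g y = k) ->
  \sum_(b < n) v b x * cov_form Gam om a b x + \sum_(b < n) om b x * cov_vec v a b x
  + (f x * pd g a x + g x * pd f a x) = 0.
Proof.
move=> oU Ux dom dv df dg cst.
rewrite -pd_contr_cov // -pd_mul //.
transitivity (pd (fun y => contr om v y + f y * g y) a x).
  by rewrite /pd deriveD //; [apply: derivable_contr | apply: derivableM].
by rewrite (pd_eq_on_open (a:=a) oU Ux cst) /pd derive_cst.
Qed.
End CovariantCalculus.

Section FtenContractions.
Variables (R : realType) (n : nat) (nv ell : 'I_n -> 'rV[R]_n -> R) (x : 'rV[R]_n).

Lemma Ften_antisym a b : Ften ell a b x = - Ften ell b a x.
Proof. by rewrite /Ften; ring. Qed.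

Lemma sformE a : sform nv ell a x = - \sum_(b < n) Ften ell a b x * nv b x.
Proof. by rewrite /sform -sumrN; apply: eq_bigr => b _; rewrite Ften_antisym; ring. Qed.

Lemma contr_nv_sform : \sum_(a < n) nv a x * sform nv ell a x = 0.
Proof.
have double_sum : \sum_(a < n) nv a x * sform nv ell a x
    = \sum_(a < n) \sum_(b < n) nv a x * nv b x * Ften ell b a x.
  by apply: eq_bigr => a _; rewrite /sform big_distrr; apply: eq_bigr => b _ /=; ring.
apply/eqP; rewrite -eqNr double_sum; apply/eqP.
rewrite [RHS]exchange_big /= -sumrN; apply: eq_bigr => a _.
by rewrite -sumrN; apply: eq_bigr => b _; rewrite Ften_antisym; ring.
Qed.
End FtenContractions.

Section MetricHypersurfaceData.
Variables (R : realType) (n : nat) (U : set 'rV[R]_n).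
Variables (gam P : 'I_n -> 'I_n -> 'rV[R]_n -> R) (ell nv : 'I_n -> 'rV[R]_n -> R).
Variables (ell2 n2 : 'rV[R]_n -> R) (Gam : 'I_n -> 'I_n -> 'I_n -> 'rV[R]_n -> R).
Hypothesis data : metric_hypersurface_data U gam ell ell2 P nv n2.
Hypothesis nabla : is_ring_nabla U gam ell ell2 nv n2 Gam.
Variables (x : 'rV[R]_n) (Ux : U x).

Local Notation Ut := (Uten nv n2 gam ell).
Local Notation F := (Ften ell).
Local Notation s := (sform nv ell).

Let oU : open U. Proof. by case: data. Qed.

Let derivable_data a :
  [/\ forall b c, derivable (gam b c) x (ei R a), forall b, derivable (ell b) x (ei R a),
      derivable ell2 x (ei R a), forall b, derivable (nv b) x (ei R a)
    & derivable n2 x (ei R a)].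
Proof.
case: data => _ [dgam [dell [dell2 [_ [dnv [dn2 _]]]]]].
by split=> *; apply: diff_on_derivable Ux.
Qed.

Let relations y (Uy : U y) :=
  proj2 (proj2 (proj2 (proj2 (proj2 (proj2 (proj2 data)))))) y Uy.

Let gam_sym y : U y -> forall a b, gam a b y = gam b a y.
Proof. by move=> /relations [sym _]. Qed.

Let gam_nv y : U y -> forall a, \sum_(b < n) gam a b y * nv b y + n2 y * ell a y = 0.
Proof. by move=> /relations [_ [_ [_ [rel _]]]]. Qed.

Let ell_nv y : U y -> \sum_(a < n) ell a y * nv a y + n2 y * ell2 y = 1.
Proof. by move=> /relations [_ [_ [_ [_ [rel _]]]]]. Qed.

Let P_ell a : \sum_(b < n) P a b x * ell b x + ell2 x * nv a x = 0.
Proof. by case: (relations Ux) => _ [_ [_ [_ [_ [rel _]]]]]. Qed.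

Let P_gam a b : \sum_(c < n) P a c x * gam c b x + ell b x * nv a x = (a == b)%:R.
Proof. by case: (relations Ux) => _ [_ [_ [_ [_ [_ rel]]]]]. Qed.

Lemma Uten_sym a b : Ut a b x = Ut b a x.
Proof.
have pd_gam_sym c : pd (gam a b) c x = pd (gam b a) c x.
  by apply: (pd_eq_on_open oU Ux) => y /gam_sym.
rewrite /Uten /lie_sym2; congr (2^-1 * _ + _); last by ring.
apply: eq_bigr => c _.
by rewrite pd_gam_sym !(gam_sym Ux c) (gam_sym Ux a c) (gam_sym Ux b c); ring.
Qed.

Lemma ell_cov_nv a :
  \sum_(b < n) ell b x * cov_vec Gam nv a b x
  = (s a x - n2 x * pd ell2 a x)
    + (\sum_(b < n) Ut a b x * nv b x - pd n2 a x) * ell2 x.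
Proof.
have [_ dell dell2 dnv dn2] := derivable_data a.
have [_ [_ cov_ell]] := nabla Ux.
have := cov_leibniz_locally_cst Gam oU Ux dell dnv dn2 dell2 ell_nv.
under eq_bigr do rewrite cov_ell.
move=> /eqP; rewrite addrAC addrC addr_eq0 => /eqP ->.
have contr_nv : \sum_(b < n) nv b x * (F a b x - ell2 x * Ut a b x)
    = \sum_(b < n) F a b x * nv b x - ell2 x * \sum_(b < n) Ut a b x * nv b x.
  by rewrite big_distrr -sumrB; apply: eq_bigr => b _ /=; ring.
by rewrite contr_nv sformE; ring.
Qed.

Lemma gam_cov_nv a c :
  \sum_(b < n) gam c b x * cov_vec Gam nv a b x
  = (Ut a c x - n2 x * F a c x)
    + (\sum_(b < n) Ut a b x * nv b x - pd n2 a x) * ell c x.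
Proof.
have [dgam dell _ dnv dn2] := derivable_data a.
have [_ [cov_gam cov_ell]] := nabla Ux.
have cov_gam_row b : cov_form Gam (gam c) a b x
    = - ell b x * Ut a c x - ell c x * Ut a b x + \sum_(d < n) Gam d a c x * gam d b x.
  by rewrite -cov_gam /cov_sym2 /cov_form; ring.
have pd_ell : pd (ell c) a x
    = F a c x - ell2 x * Ut a c x + \sum_(d < n) Gam d a c x * ell d x.
  by rewrite -cov_ell /cov_form; ring.
have ell_nv_x : \sum_(b < n) ell b x * nv b x = 1 - n2 x * ell2 x.
  by rewrite -(ell_nv Ux) addrK.
have christoffel_gam_nv : \sum_(b < n) nv b x * \sum_(d < n) Gam d a c x * gam d b x
    = - (n2 x * \sum_(d < n) Gam d a c x * ell d x).
  under eq_bigr do rewrite big_distrr /=.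
  rewrite exchange_big -mulNr big_distrr /=; apply: eq_bigr => d _.
  move/eqP: (gam_nv Ux d); rewrite addr_eq0 => /eqP gam_nv_d.
  transitivity (Gam d a c x * \sum_(b < n) gam d b x * nv b x); last by rewrite gam_nv_d; ring.
  by rewrite big_distrr; apply: eq_bigr => b _ /=; ring.
have contr_nv : \sum_(b < n) nv b x * cov_form Gam (gam c) a b x
    = - (1 - n2 x * ell2 x) * Ut a c x - ell c x * \sum_(b < n) Ut a b x * nv b x
      - n2 x * \sum_(d < n) Gam d a c x * ell d x.
  under eq_bigr do rewrite cov_gam_row.
  rewrite (eq_bigr (fun b => - Ut a c x * (ell b x * nv b x)
      - ell c x * (Ut a b x * nv b x)
      + nv b x * \sum_(d < n) Gam d a c x * gam d b x)); last by move=> b _; ring.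
  by rewrite big_split sumrB /= -!big_distrr /= christoffel_gam_nv ell_nv_x; ring.
have := cov_leibniz_locally_cst Gam oU Ux (dgam c) dnv dn2 (dell c) (fun y Uy => gam_nv Uy c).
move=> /eqP; rewrite addrAC addrC addr_eq0 => /eqP ->.
by rewrite contr_nv pd_ell; ring.
Qed.

Lemma cov_nv a c :
  cov_vec Gam nv a c x
  = \sum_(d < n) P c d x * (Ut a d x - n2 x * F a d x)
    + (s a x - n2 x * pd ell2 a x) * nv c x.
Proof. exact: (duality_solve P_ell P_gam (gam_cov_nv a) (ell_cov_nv a)). Qed.

Lemma pd_n2 a :
  pd n2 a x = 2 * \sum_(b < n) Ut a b x * nv b x + 2 * n2 x * s a x
              - n2 x ^+ 2 * pd ell2 a x.
Proof.
have := duality_multiplier (gam_sym Ux) (gam_nv Ux) (ell_nv Ux) (gam_cov_nv a) (ell_cov_nv a).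
have -> : \sum_(c < n) nv c x * (Ut a c x - n2 x * F a c x)
          = \sum_(b < n) Ut a b x * nv b x + n2 x * s a x.
  by rewrite sformE mulrN big_distrr -sumrN -big_split; apply: eq_bigr => b _ /=; ring.
by move=> mu_eq; rewrite -(subKr (\sum_(b < n) Ut a b x * nv b x) (pd n2 a x)) mu_eq; ring.
Qed.

Lemma nv_Uten c :
  \sum_(a < n) nv a x * Ut a c x
  = 2^-1 * pd n2 c x + 2^-1 * n2 x ^+ 2 * pd ell2 c x - n2 x * s c x.
Proof.
have -> : \sum_(a < n) nv a x * Ut a c x = \sum_(b < n) Ut c b x * nv b x.
  by apply: eq_bigr => b _; rewrite Uten_sym mulrC.
by rewrite pd_n2; field.
Qed.

Lemma contr_cov_nv (th : 'I_n -> 'rV[R]_n -> R) a :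
  \sum_(b < n) th b x * cov_vec Gam nv a b x
  = contr th nv x * (s a x - n2 x * pd ell2 a x)
    + \sum_(b < n) \sum_(c < n) P b c x * (Ut a c x - n2 x * F a c x) * th b x.
Proof.
under eq_bigr do rewrite cov_nv mulrDr big_distrr /=.
rewrite big_split /= addrC /contr big_distrl /=; congr (_ + _).
  by apply: eq_bigr => b _; ring.
by apply: eq_bigr => b _; apply: eq_bigr => c _; ring.
Qed.

Variable th : 'I_n -> 'rV[R]_n -> R.
Hypothesis diff_th : forall a, diff_on U (th a).

Local Notation thn := (contr th nv).
Local Notation PU a := (\sum_(b < n) \sum_(c < n) P b c x * Ut a c x * th b x).
Local Notation PF a := (\sum_(b < n) \sum_(c < n) P b c x * F a c x * th b x).

Let pd_thn a :
  pd thn a x = \sum_(b < n) nv b x * cov_form Gam th a b x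
               + \sum_(b < n) th b x * cov_vec Gam nv a b x.
Proof.
have [_ _ _ dnv _] := derivable_data a.
by apply: pd_contr_cov dnv => b; apply: diff_on_derivable Ux.
Qed.

Lemma nv_cov_form a :
  \sum_(b < n) nv b x * cov_form Gam th a b x
  = pd thn a x - thn x * s a x - PU a + n2 x * (thn x * pd ell2 a x + PF a).
Proof. by rewrite pd_thn contr_cov_nv double_sumB; ring. Qed.

Lemma nv_cov_form_swap a :
  \sum_(b < n) nv b x * cov_form Gam th b a x
  = lie_form nv th a x - thn x * s a x - PU a + n2 x * (thn x * pd ell2 a x + PF a).
Proof.
have [Gam_sym _] := nabla Ux.
rewrite (lie_form_cov (Gam := Gam)); last by move=> c b; apply: Gam_sym.
by rewrite contr_cov_nv double_sumB; ring.
Qed.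

Lemma nv_nv_cov_form :
  \sum_(a < n) \sum_(b < n) nv a x * nv b x * cov_form Gam th a b x
  = lie_fun nv thn x + n2 x * thn x * lie_fun nv ell2 x
    + \sum_(b < n) \sum_(c < n) P b c x * th b x *
        (2 * n2 x * s c x - 2^-1 * n2 x ^+ 2 * pd ell2 c x - 2^-1 * pd n2 c x).
Proof.
have nv_Uten_F c : \sum_(a < n) nv a x * (Ut a c x - n2 x * F a c x)
    = - (2 * n2 x * s c x - 2^-1 * n2 x ^+ 2 * pd ell2 c x - 2^-1 * pd n2 c x).
  have -> : \sum_(a < n) nv a x * (Ut a c x - n2 x * F a c x)
            = \sum_(a < n) nv a x * Ut a c x - n2 x * s c x.
    by rewrite /sform big_distrr -sumrB; apply: eq_bigr => a _ /=; ring.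
  by rewrite nv_Uten; ring.
have contr_pd_thn : \sum_(a < n) \sum_(b < n) nv a x * nv b x * cov_form Gam th a b x
    = \sum_(a < n) nv a x * (pd thn a x - \sum_(b < n) th b x * cov_vec Gam nv a b x).
  apply: eq_bigr => a _; rewrite pd_thn addrK big_distrr.
  by apply: eq_bigr => b _ /=; ring.
rewrite contr_pd_thn.
under eq_bigr do rewrite contr_cov_nv.
rewrite (eq_bigr (fun a => nv a x * pd thn a x - thn x * (nv a x * s a x)
    + n2 x * thn x * (nv a x * pd ell2 a x)
    - nv a x * \sum_(b < n) \sum_(c < n) P b c x * (Ut a c x - n2 x * F a c x) * th b x));
  last by move=> a _; ring.
rewrite !(sumrB, big_split) /= -!big_distrr /= contr_nv_sform sum_mul_double_sum.
have -> : \sum_(b < n) \sum_(c < n)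
      P b c x * (\sum_(a < n) nv a x * (Ut a c x - n2 x * F a c x)) * th b x
    = - \sum_(b < n) \sum_(c < n) P b c x * th b x *
        (2 * n2 x * s c x - 2^-1 * n2 x ^+ 2 * pd ell2 c x - 2^-1 * pd n2 c x).
  rewrite -sumrN; apply: eq_bigr => b _; rewrite -sumrN; apply: eq_bigr => c _.
  by rewrite nv_Uten_F; ring.
by rewrite /lie_fun; ring.
Qed.
End MetricHypersurfaceData.

Theorem lemmaC1 (R : realType) (n : nat) (U : set 'rV[R]_n)
  (gam : 'I_n -> 'I_n -> 'rV[R]_n -> R) (ell : 'I_n -> 'rV[R]_n -> R)
  (ell2 : 'rV[R]_n -> R) (P : 'I_n -> 'I_n -> 'rV[R]_n -> R)
  (nv : 'I_n -> 'rV[R]_n -> R) (n2 : 'rV[R]_n -> R)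
  (Gam : 'I_n -> 'I_n -> 'I_n -> 'rV[R]_n -> R) (th : 'I_n -> 'rV[R]_n -> R) :
  metric_hypersurface_data U gam ell ell2 P nv n2 ->
  is_ring_nabla U gam ell ell2 nv n2 Gam ->
  (forall a, diff_on U (th a)) ->
  forall x, U x ->
  let Ut := Uten nv n2 gam ell in
  let F := Ften ell in
  let s := sform nv ell in
  let thn := contr th nv in
  let PU a := \sum_(b < n) \sum_(c < n) P b c x * Ut a c x * th b x in
  let PF a := \sum_(b < n) \sum_(c < n) P b c x * F a c x * th b x in
  (forall a,
     \sum_(b < n) nv b x * cov_form Gam th a b x
     = cov_fun thn a x - thn x * s a x - PU a
       + n2 x * (thn x * cov_fun ell2 a x + PF a)) /\
  (forall a,
     \sum_(b < n) nv b x * cov_form Gam th b a x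
     = lie_form nv th a x - thn x * s a x - PU a
       + n2 x * (thn x * cov_fun ell2 a x + PF a)) /\
  (forall a,
     \sum_(b < n) nv b x * (cov_form Gam th a b x + cov_form Gam th b a x)
     = lie_form nv th a x + cov_fun thn a x - 2 * (thn x * s a x + PU a)
       + 2 * n2 x * (thn x * cov_fun ell2 a x + PF a)) /\
  (\sum_(a < n) \sum_(b < n) nv a x * nv b x * cov_form Gam th a b x
   = lie_fun nv thn x + n2 x * thn x * lie_fun nv ell2 x
     + \sum_(b < n) \sum_(c < n) P b c x * th b x *
         (2 * n2 x * s c x - 2^-1 * n2 x ^+ 2 * cov_fun ell2 c x
          - 2^-1 * cov_fun n2 c x)).
Proof.
move=> data nabla diff_th x Ux; cbv zeta.
have id1 := nv_cov_form data nabla Ux diff_th.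
have id2 := nv_cov_form_swap data nabla Ux th.
split; first exact: id1.
split; first exact: id2.
split; last by rewrite (nv_nv_cov_form data nabla Ux diff_th).
move=> a; under eq_bigr do rewrite mulrDr.
by rewrite big_split /= id1 id2 /cov_fun; ring.
Qed.
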